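(* IPR with $\rho=4$ terminates after at most $O(m^2)$ iterations of its while loop, where $m$ is the number of machines.
   Context: Jobs $j\in[n]$ have processing times $p_j\ge0$; for a bag $B$, $p(B)=\sum_{j\in B}p_j$. There are $m$ machines with predicted speeds $\hat s_1\ge\dots\ge\hat s_m$; $opt(\mathbf p,\hat{\mathbf s})$ is the minimum makespan $\max_i(\text{load of } i)/\hat s_i$ of assigning jobs to machines with speeds $\hat{\mathbf s}$. Algorithm IPR. Input: $\hat{\mathbf s}$, $\mathbf p$, $\alpha\in(0,1)$, accuracy $\epsilon\in(0,1)$, $\rho\ge1$. (1) Compute a partition $B_1,\dots,B_m$ with $p(B_1)\ge\dots\ge p(B_m)$ such that putting $B_i$ on machine $i$ has makespan at most $(1+\epsilon)opt(\mathbf p,\hat{\mathbf s})$ under speeds $\hat{\mathbf s}$. (2) Set $\overline{OPT}_C=\max_i p(B_i)/\hat s_i$ and tentative assignment $\mathcal M_i=\{B_i\}$. (3) While $\max\{p(B): B\in\cup_i\mathcal M_i, |B|\ge2\}>\rho\min\{p(B):B\in\cup_i\mathcal M_i\}$ (each execution of the loop body is an iteration): compute $\mathcal M'=$ LPT-Rebalance$(\mathcal M)$; if $\max_i\sum_{B\in\mathcal M'_i}p(B)/\hat s_i>(1+\alpha)\overline{OPT}_C$ return the current bags $\cup_i\mathcal M_i$; else $\mathcal M\leftarrow\mathcal M'$. (4) Return the bags $\cup_i\mathcal M_i$. LPT-Rebalance: let $B_{\min}$ be a bag of minimum $p(B)$ over all bags, $\mathcal M_{\min}$ its collection, $\mathcal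 M_{\max}$ a collection containing a bag of maximum $p(B)$ among bags with at least two jobs. Move $B_{\min}$ into $\mathcal M_{\max}$, let $\ell=|\mathcal M_{\max}|$, pool its jobs and redistribute them into $\ell$ new bags by LPT (jobs in non-increasing processing time, each into a currently least-loaded bag); these form the new $\mathcal M_{\max}$. *)

From mathcomp Require Import all_boot all_order all_algebra.
From mathcomp Require Import reals.
Set Implicit Arguments. Unset Strict Implicit. Unset Printing Implicit Defensive.
Import Order.TTheory GRing.Theory Num.Theory.
Local Open Scope ring_scope.

Section IPR.
Variables (R : realType) (n m : nat) (p : 'I_n -> R) (s : 'I_m -> R).

(* A bag is a list of jobs; a collection is a list of bags; a state (tentative
   assignment M) gives, for each machine i < m, its collection M_i. *)
Definition bag := seq 'I_n.
Definition coll := seq bag.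
Definition state := seq coll.

Definition pB (B : bag) : R := \sum_(j <- B) p j.

Definition bags (M : state) : seq bag := flatten M.

Definition load (M : state) (i : 'I_m) : R := \sum_(B <- nth [::] M i) pB B.

(* max_i (load of i) / s_i  (loads are nonnegative, so 0 is a neutral start) *)
Definition makespan_state (M : state) : R :=
  \big[Num.max/0]_(i < m) (load M i / s i).

Definition makespan_assign (a : {ffun 'I_n -> 'I_m}) : R :=
  \big[Num.max/0]_(i < m) ((\sum_(j | a j == i) p j) / s i).

Definition is_opt (v : R) : Prop :=
  (exists a, makespan_assign a = v) /\ (forall a, v <= makespan_assign a).

(* Loop condition:  max{p(B) : |B| >= 2} > rho * min{p(B)} over all bags *)
Definition loop_cond (rho : R) (M : state) : Prop :=
  exists B1 B2, B1 \in bags M /\ (2 <= size B1)%N /\ B2 \in bags M /\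
                rho * pB B2 < pB B1.

Definition rem_at (T : Type) (k : nat) (c : seq T) : seq T :=
  take k c ++ drop k.+1 c.

Inductive lpt_run : seq bag -> seq 'I_n -> seq bag -> Prop :=
| lpt_done bs : lpt_run bs [::] bs
| lpt_step bs j js k bs' :
    (k < size bs)%N ->
    (forall k', (k' < size bs)%N -> pB (nth [::] bs k) <= pB (nth [::] bs k')) ->
    lpt_run (set_nth [::] bs k (rcons (nth [::] bs k) j)) js bs' ->
    lpt_run bs (j :: js) bs'.

Definition LPT (jobs : seq 'I_n) (l : nat) (out : seq bag) : Prop :=
  exists js, perm_eq js jobs /\ sorted (fun a b => p b <= p a) js /\
             lpt_run (nseq l [::]) js out.

(* M' is a possible result of LPT-Rebalance(M). Bag B_min is the kmin-th bag
   of collection imin; collection imax contains a bag (the kmax-th) of maximum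
   p(B) among bags with at least two jobs. *)
Definition rebalance (M M' : state) : Prop :=
  exists imin kmin imax kmax,
  let Bmin := nth [::] (nth [::] M imin) kmin in
  let Bmax := nth [::] (nth [::] M imax) kmax in
  (imin < size M)%N /\ (kmin < size (nth [::] M imin))%N /\
  (forall B, B \in bags M -> pB Bmin <= pB B) /\
  (imax < size M)%N /\ (kmax < size (nth [::] M imax))%N /\
  (2 <= size Bmax)%N /\
  (forall B, B \in bags M -> (2 <= size B)%N -> pB B <= pB Bmax) /\
  let M1 := if imin == imax then M
            else set_nth [::] (set_nth [::] M imin (rem_at kmin (nth [::] M imin)))
                   imax (rcons (nth [::] M imax) Bmin) in
  let Cmax := nth [::] M1 imax in
  exists out, LPT (flatten Cmax) (size Cmax) out /\ M' = set_nth [::] M1 imax out.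

Definition init_partition (eps : R) (Bs : seq bag) : Prop :=
  size Bs = m /\ perm_eq (flatten Bs) (enum 'I_n) /\
  sorted (fun B1 B2 => pB B2 <= pB B1) Bs /\
  exists v, is_opt v /\
    (forall i : 'I_m, pB (nth [::] Bs i) / s i <= (1 + eps) * v).

Definition OPTC (Bs : seq bag) : R :=
  \big[Num.max/0]_(i < m) (pB (nth [::] Bs i) / s i).

(* Some run of IPR(s, p, alpha, eps, rho) executes at least k iterations of the
   while loop: the states M_0, ..., M_{k-1} at the start of iterations 1..k are
   reachable, each iteration t < k-1 passed the check and did not return, and the
   loop condition holds at M_{k-1} (so the k-th iteration is executed). *)
Definition executes_iterations (alpha eps rho : R) (k : nat) : Prop :=
  exists Bs, init_partition eps Bs /\
  exists Ms : nat -> state,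
    Ms 0%N = map (fun B => [:: B]) Bs /\
    (forall t, (t.+1 < k)%N ->
       loop_cond rho (Ms t) /\ rebalance (Ms t) (Ms t.+1) /\
       makespan_state (Ms t.+1) <= (1 + alpha) * OPTC Bs) /\
    ((0 < k)%N -> loop_cond rho (Ms k.-1)).

End IPR.

(* Call the collection of machine i settled once it has been the collection of
   a minimum bag.  Two invariants hold throughout: inside every collection a bag
   with at least two jobs weighs at most twice any other bag of that collection,
   and a multi-job bag of a settled collection weighs at most twice the lightest
   bag overall.  With rho = 4 the loop condition therefore puts B_min and the
   heaviest multi-job bag into different collections, the latter unsettled, and
   every bag of the latter weighs at least 2 p(B_min).  LPT then produces bags
   satisfying the first invariant and none lighter than B_min, so the collection
   of B_min becomes settled.  The potential sum_i (|M_i| if i is settled, else m)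
   starts at m^2, as there are always m bags, and drops in every iteration. *)
From mathcomp Require Import all_boot all_order all_algebra.
From mathcomp Require Import reals.
From mathcomp Require Import lra zify.
Set Implicit Arguments. Unset Strict Implicit. Unset Printing Implicit Defensive.
Import Order.TTheory GRing.Theory Num.Theory.
Local Open Scope ring_scope.

Lemma mem_set_nth_inv (T : eqType) (x0 : T) (s : seq T) k y x :
  (k < size s)%N -> x \in set_nth x0 s k y -> x = y \/ x \in s.
Proof.
move=> hk; rewrite set_nthE hk mem_cat in_cons.
by case/orP=> [/mem_take ->|/orP [/eqP ->|/mem_drop ->]]; [right|left|right].
Qed.

Lemma mem_flatten_nth (T : eqType) (ss : seq (seq T)) i x :
  x \in nth [::] ss i -> x \in flatten ss.
Proof.
case: (ltnP i (size ss)) => hi; last by rewrite nth_default.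
by move=> hx; apply/flattenP; exists (nth [::] ss i); rewrite ?mem_nth.
Qed.

Lemma flatten_nthP (T : eqType) (ss : seq (seq T)) x :
  x \in flatten ss -> exists2 i, (i < size ss)%N & x \in nth [::] ss i.
Proof. by case/flattenP => c /(nthP [::]) [i hi <-] hx; exists i. Qed.

Lemma mem_flatten_set_nth (T : eqType) (ss : seq (seq T)) k c x :
  (k < size ss)%N -> x \in flatten (set_nth [::] ss k c) -> x \in c \/ x \in flatten ss.
Proof.
move=> hk /flattenP [d /(mem_set_nth_inv hk) [-> | hd] hx]; first by left.
by right; apply/flattenP; exists d.
Qed.

Lemma perm_flatten_set_nth_rcons (T : eqType) (ss : seq (seq T)) k x :
  (k < size ss)%N ->
  perm_eq (flatten (set_nth [::] ss k (rcons (nth [::] ss k) x))) (rcons (flatten ss) x).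
Proof.
move=> hk; rewrite set_nthE hk.
have -> : flatten ss = flatten (take k ss ++ nth [::] ss k :: drop k.+1 ss).
  by rewrite -drop_nth // cat_take_drop.
by rewrite !flatten_cat /= -!cats1 -!catA !perm_cat2l perm_catC.
Qed.

Lemma size_nth_flatten (T : Type) (ss : seq (seq T)) i :
  (size (nth [::] ss i) <= size (flatten ss))%N.
Proof.
elim: ss i => [|c ss IH] [|i] //=; rewrite size_cat; first exact: leq_addr.
exact: leq_trans (IH i) (leq_addl _ _).
Qed.

Lemma size_flatten_set_nth (T : Type) (ss : seq (seq T)) k c : (k < size ss)%N ->
  size (flatten (set_nth [::] ss k c)) =
    (size (flatten ss) + size c - size (nth [::] ss k))%N.
Proof.
elim: ss k => [|d ss IH] [|k] //= hk; rewrite !size_cat; first lia.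
by rewrite IH //; have := size_nth_flatten ss k; lia.
Qed.

Lemma flatten_nseq_nil (T : Type) l : flatten (nseq l ([::] : seq T)) = [::].
Proof. by elim: l. Qed.

Lemma mem_rem_at (T : eqType) k (s : seq T) x : x \in rem_at k s -> x \in s.
Proof. by rewrite /rem_at mem_cat => /orP [/mem_take|/mem_drop]. Qed.

Lemma size_rem_at (T : Type) k (s : seq T) :
  (k < size s)%N -> size (rem_at k s) = (size s).-1.
Proof. by move=> hk; rewrite /rem_at size_cat size_takel ?size_drop; lia. Qed.

Lemma count_has_flatten (T : Type) (a : pred T) (ss : seq (seq T)) :
  (count (has a) ss <= count a (flatten ss))%N.
Proof.
elim: ss => [|s ss IH] //=; rewrite count_cat leq_add //.
by rewrite has_count; case: (count a s).
Qed.

Lemma count_has_flatten_eq (T : eqType) (a : pred T) (ss : seq (seq T)) :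
  (forall s, s \in ss -> (count a s <= 1)%N) ->
  count (has a) ss = count a (flatten ss).
Proof.
elim: ss => [|s ss IH] //= hle; rewrite count_cat -IH => [|t ht]; last first.
  by apply: hle; rewrite in_cons ht orbT.
have := hle s (mem_head _ _); rewrite has_count.
by case: (count a s) => [|[]].
Qed.

Lemma count_has_le_perm (T : eqType) (a : pred T) (ss ss' : seq (seq T)) :
  perm_eq (flatten ss') (flatten ss) -> (forall s, s \in ss' -> (count a s <= 1)%N) ->
  (count (has a) ss <= count (has a) ss')%N.
Proof.
by move=> hperm hle; rewrite (count_has_flatten_eq hle) (permP hperm) count_has_flatten.
Qed.

Lemma sum_ltn_ord m (F G : 'I_m -> nat) i0 :
  (forall i, (F i <= G i)%N) -> (F i0 < G i0)%N ->
  (\sum_(i < m) F i < \sum_(i < m) G i)%N.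
Proof.
move=> hle hlt; rewrite (bigD1 i0) // [X in (_ < X)%N](bigD1 i0) //=.
by rewrite -addSn leq_add // leq_sum.
Qed.

Section Weights.
Context {R : realType} {n : nat} (p : 'I_n -> R).
Hypothesis p_ge0 : forall j, 0 <= p j.

Lemma pB_ge0 B : 0 <= pB p B.
Proof. exact: sumr_ge0. Qed.

Lemma pB_rcons B j : pB p (rcons B j) = pB p B + p j.
Proof. by rewrite /pB big_rcons. Qed.

Lemma le_p_pB B x : x \in B -> p x <= pB p B.
Proof. by move=> hx; rewrite /pB (big_rem x hx) /= lerDl sumr_ge0. Qed.

Definition placed_ge_pending (bs : seq (bag n)) (js : seq 'I_n) : Prop :=
  forall x y, x \in flatten bs -> y \in js -> p y <= p x.

Definition prefix_le_bags (bs : seq (bag n)) : Prop :=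
  forall B0 j, rcons B0 j \in bs -> forall B, B \in bs -> pB p B0 <= pB p B.

Definition last_lightest (bs : seq (bag n)) : Prop :=
  forall B0 j, rcons B0 j \in bs -> forall x, x \in B0 -> p j <= p x.

(* [prefix_le_bags] holds because loads only grow: when the last job of a bag
   arrived, that bag was a lightest one. *)
Lemma lpt_run_inv bs js out :
  lpt_run p bs js out -> sorted (fun a b => p b <= p a) js ->
  placed_ge_pending bs js -> prefix_le_bags bs -> last_lightest bs ->
  [/\ prefix_le_bags out, last_lightest out, size out = size bs
    & perm_eq (flatten out) (flatten bs ++ js)].
Proof.
elim=> {bs js out} [bs|bs j js k bs' hk hmin _ IH] hs hge hpre hlast.
  by split; rewrite ?cats0.
set N := nth [::] bs k; set bs1 := set_nth [::] bs k (rcons N j).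
have hjs : all (fun y => p y <= p j) js.
  by apply: order_path_min hs => b a c h1 h2; apply: le_trans h2 h1.
have hN : forall x, x \in N -> x \in flatten bs by move=> x; apply: mem_flatten_nth.
have hNmin : forall B, B \in bs -> pB p N <= pB p B.
  by move=> B /(nthP [::]) [k' hk' <-]; apply: hmin.
have hlow : forall B, B \in bs1 -> exists2 B', B' \in bs & pB p B' <= pB p B.
  move=> B /(mem_set_nth_inv hk) [->|hB]; last by exists B.
  by exists N; rewrite ?mem_nth // pB_rcons lerDl.
have hge1 : placed_ge_pending bs1 js.
  move=> x y /(mem_flatten_set_nth hk) [hx|hx] hy; last first.
    by apply: hge => //; rewrite in_cons hy orbT.
  move: hx; rewrite mem_rcons in_cons => /orP [/eqP ->|hx]; first exact: (allP hjs).
  by apply: hge; rewrite ?hN // in_cons hy orbT.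
have hpre1 : prefix_le_bags bs1.
  move=> B0 j' /(mem_set_nth_inv hk) [/rcons_inj [-> _]|hB] B /hlow [B' hB' le'].
    exact: le_trans (hNmin _ hB') le'.
  exact: le_trans (hpre _ _ hB _ hB') le'.
have hlast1 : last_lightest bs1.
  move=> B0 j' /(mem_set_nth_inv hk) [/rcons_inj [-> ->]|hB] x hx.
    by apply: hge; rewrite ?hN ?mem_head.
  exact: hlast hB x hx.
have [hpre' hlast' hsz hperm] := IH (path_sorted hs) hge1 hpre1 hlast1.
split=> //; first by rewrite hsz size_set_nth; apply/maxn_idPr.
apply: perm_trans hperm _; rewrite -cat1s catA perm_cat2r cats1.
exact: perm_flatten_set_nth_rcons.
Qed.

Lemma LPT_inv jobs l out : LPT p jobs l out ->
  [/\ prefix_le_bags out, last_lightest out, size out = l & perm_eq (flatten out) jobs].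
Proof.
case=> js [hperm [hs hrun]].
have hge0 : placed_ge_pending (nseq l [::]) js by move=> x y; rewrite flatten_nseq_nil.
have hpre0 : prefix_le_bags (nseq l [::]).
  by move=> B0 j; rewrite mem_nseq => /andP [_ /eqP]; case: B0.
have hlast0 : last_lightest (nseq l [::]).
  by move=> B0 j; rewrite mem_nseq => /andP [_ /eqP]; case: B0.
have [hpre hlast hsz hperm'] := lpt_run_inv hrun hs hge0 hpre0 hlast0.
rewrite size_nseq flatten_nseq_nil /= in hsz hperm'.
by split=> //; apply: perm_trans hperm' hperm.
Qed.

Section LPTBags.
Variable out : seq (bag n).
Hypotheses (out_pre : prefix_le_bags out) (out_last : last_lightest out).

Lemma lpt_job_le_bag B B' x : B \in out -> B' \in out -> (2 <= size B)%N ->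
  x \in B -> p x <= pB p B'.
Proof.
move=> hB hB'; case/lastP E: B hB => [|B0 l] //; rewrite size_rcons => hB.
case: B0 E hB => [|y B1] // E hB _.
have h1 := out_pre hB hB'.
have h2 := le_p_pB (mem_head y B1).
rewrite mem_rcons in_cons => /orP [/eqP ->|hx].
  by apply: le_trans (out_last hB (mem_head _ _)) _; lra.
by apply: le_trans (le_p_pB hx) h1.
Qed.

Lemma lpt_bag_le2_of_jobs B B' : B \in out -> B' \in out ->
  (forall x, x \in B -> p x <= pB p B') -> pB p B <= 2 * pB p B'.
Proof.
move=> hB hB' hx; case/lastP E: B hB hx => [|B0 l] hB hx.
  by rewrite /pB big_nil mulr_ge0 ?pB_ge0.
have := out_pre hB hB'; have := hx l; rewrite mem_rcons mem_head pB_rcons.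
by move=> /(_ isT); lra.
Qed.

Lemma lpt_bag_le2 B B' : B \in out -> B' \in out -> (2 <= size B)%N ->
  pB p B <= 2 * pB p B'.
Proof.
by move=> hB hB' hs; apply: lpt_bag_le2_of_jobs => // x; apply: lpt_job_le_bag.
Qed.

End LPTBags.

Section LightWeight.
Variable big : pred 'I_n.

Definition light (B : bag n) : R := \sum_(x <- B | ~~ big x) p x.

Lemma light_nobig B : ~~ has big B -> light B = pB p B.
Proof.
by rewrite -all_predC /light -big_filter => /all_filterP ->.
Qed.

Lemma sum_light_ge (ss : seq (bag n)) c :
  (forall B, B \in ss -> ~~ has big B -> c <= pB p B) ->
  (count (predC (has big)) ss)%:R * c <= \sum_(B <- ss) light B.
Proof.
elim: ss => [|B ss IH] hc; first by rewrite big_nil mul0r.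
have {}IH : (count (predC (has big)) ss)%:R * c <= \sum_(B <- ss) light B.
  by apply: IH => B' hB'; apply: hc; rewrite in_cons hB' orbT.
rewrite big_cons /=; case: (boolP (has big B)) => hb /=.
  by rewrite add0n -[X in X <= _]add0r lerD // sumr_ge0.
by rewrite add1n mulrSr mulrDl mul1r addrC lerD // light_nobig // hc ?mem_head.
Qed.

Lemma sum_light_le (ss : seq (bag n)) c : 0 <= c ->
  (forall B, B \in ss -> has big B -> (size B <= 1)%N) ->
  (forall B, B \in ss -> ~~ has big B -> pB p B <= c) ->
  \sum_(B <- ss) light B <= (count (predC (has big)) ss)%:R * c.
Proof.
move=> c0; elim: ss => [|B ss IH] hbig hc; first by rewrite big_nil mul0r.
have {}IH : \sum_(B <- ss) light B <= (count (predC (has big)) ss)%:R * c.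
  by apply: IH => B' hB'; [apply: hbig | apply: hc]; rewrite in_cons hB' orbT.
rewrite big_cons /=; case: (boolP (has big B)) => hb /=.
  have := hbig B (mem_head _ _) hb; move: hb; case: B {hbig hc} => [|x []] //=.
  by rewrite orbF => hx _; rewrite /light big_cons big_nil hx add0r.
by rewrite add1n mulrSr mulrDl mul1r addrC lerD // light_nobig // hc ?mem_head.
Qed.

End LightWeight.

(* Let v be the weight of an output bag and call jobs heavier than v big.  Big
   jobs sit alone in their output bags, so at least as many input as output
   bags are free of big jobs, say q_in >= q_out >= 1; weighing the remaining
   jobs on both sides gives (2 q_in - 1) a <= (2 q_out - 1) v. *)
Lemma lpt_bag_ge (X : seq (bag n)) Bmin a out : 0 <= a ->
  prefix_le_bags out -> last_lightest out -> size out = (size X).+1 ->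
  perm_eq (flatten out) (flatten (rcons X Bmin)) ->
  (forall B, B \in X -> 2 * a <= pB p B) -> a <= pB p Bmin ->
  forall Bm, Bm \in out -> a <= pB p Bm.
Proof.
move=> a0 hpre hlast hsz hperm hX hBmin Bm hBm; set v := pB p Bm.
pose big x := v < p x.
have big_alone B : B \in out -> has big B -> (size B <= 1)%N.
  move=> hB /hasP [x hx]; rewrite /big ltNge; apply: contraNleq => hs.
  exact: (lpt_job_le_bag hpre hlast hB hBm hs hx).
have nobig_Bm : ~~ has big Bm by apply/hasPn => x /le_p_pB; rewrite /big -leNgt.
set qo := count (predC (has big)) out.
set qi := count (predC (has big)) (rcons X Bmin).
have light_out : \sum_(B <- out) light big B <= qo%:R * (2 * v) - v.
  have hqo : qo = (count (predC (has big)) (rem Bm out)).+1.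
    by rewrite /qo (permP (perm_to_rem hBm)) /= nobig_Bm.
  have le_rest : \sum_(B <- rem Bm out) light big B <=
      (count (predC (has big)) (rem Bm out))%:R * (2 * v).
    apply: sum_light_le => [|B hB|B hB hb]; first by rewrite mulr_ge0 ?pB_ge0.
      exact/big_alone/(mem_rem hB).
    apply: (lpt_bag_le2_of_jobs hpre (mem_rem hB) hBm) => x hx.
    by move/hasPn: hb => /(_ x hx); rewrite /big -leNgt.
  rewrite (big_rem Bm hBm) /= light_nobig // -/v hqo.
  by rewrite -addn1 natrD; lra.
have light_in : qi%:R * (2 * a) - a <= \sum_(B <- rcons X Bmin) light big B.
  rewrite big_rcons /qi -cats1 count_cat /= addn0 natrD.
  have := sum_light_ge (big := big) (fun B hB _ => hX B hB).
  have : 0 <= light big Bmin by apply: sumr_ge0.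
  by case: (boolP (has big Bmin)) => hb /=; last rewrite light_nobig //; lra.
have light_eq : \sum_(B <- out) light big B = \sum_(B <- rcons X Bmin) light big B.
  by rewrite /light -!big_flatten /=; apply: perm_big.
have count_le : (qo <= qi)%N.
  have cnt ss : count (predC (has big)) ss = (size ss - count (has big) ss)%N.
    by rewrite -(count_predC (has big) ss) addKn.
  rewrite /qo /qi !cnt size_rcons -hsz leq_sub2l // (count_has_le_perm hperm) // => B hB.
  case: (boolP (has big B)) => [/(big_alone B hB)|]; first exact: leq_trans (count_size _ _).
  by rewrite has_count -leqNgt => /leq_trans ->.
have qo_ge1 : (1 <= qo)%N by rewrite /qo -has_count; apply/hasP; exists Bm.
have : 1 <= qo%:R :> R by rewrite ler1n.
have : qo%:R <= qi%:R :> R by rewrite ler_nat.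
have : 0 <= v by apply: pB_ge0.
nra.
Qed.

End Weights.

Section Potential.
Context {R : realType} {n : nat} (p : 'I_n -> R).
Hypothesis p_ge0 : forall j, 0 <= p j.
Variable m : nat.

Definition ipr_invariant (M : state n) (settled : nat -> bool) : Prop :=
  [/\ size M = m, size (bags M) = m,
      forall i B B', B \in nth [::] M i -> B' \in nth [::] M i -> (2 <= size B)%N ->
        pB p B <= 2 * pB p B'
    & forall i B B', settled i -> B \in nth [::] M i -> (2 <= size B)%N ->
        B' \in bags M -> pB p B <= 2 * pB p B'].

Definition potential (M : state n) (settled : nat -> bool) : nat :=
  \sum_(i < m) (if settled i then size (nth [::] M i) else m).

Lemma ipr_invariant_init (Bs : seq (bag n)) : size Bs = m ->
  ipr_invariant [seq [:: B] | B <- Bs] (fun _ => false).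
Proof.
move=> hsz; split; rewrite ?size_map /bags ?flatten_seq1 // => i B B'.
case: (ltnP i (size Bs)) => hi; last by rewrite nth_default ?size_map.
rewrite (nth_map [::]) // !mem_seq1 => /eqP -> /eqP -> _.
by rewrite mulr_natl mulr2n lerDl pB_ge0.
Qed.

Lemma potential_unsettled M : potential M (fun _ => false) = (m * m)%N.
Proof. by rewrite /potential sum_nat_const card_ord. Qed.

Section Step.
Variables (M : state n) (settled : nat -> bool) (imin kmin imax : nat) (out : seq (bag n)).
Let Y := nth [::] M imin.
Let X := nth [::] M imax.
Let Bmin := nth [::] Y kmin.
Hypotheses (invM : ipr_invariant M settled)
  (imin_lt : (imin < size M)%N) (imax_lt : (imax < size M)%N) (kmin_lt : (kmin < size Y)%N)
  (imin_imax : imin != imax) (imax_unsettled : settled imax = false)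
  (Bmin_min : forall B, B \in bags M -> pB p Bmin <= pB p B)
  (out_le2 : forall B B', B \in out -> B' \in out -> (2 <= size B)%N ->
     pB p B <= 2 * pB p B')
  (out_ge : forall B, B \in out -> pB p Bmin <= pB p B)
  (size_out : size out = (size X).+1).

Let M' := set_nth [::] (set_nth [::] M imin (rem_at kmin Y)) imax out.
Let settled' i := settled i || (i == imin).

Lemma nth_step i : nth [::] M' i =
  if i == imax then out else if i == imin then rem_at kmin Y else nth [::] M i.
Proof. by rewrite /M' nth_set_nth /= nth_set_nth. Qed.

Lemma size_Y : (0 < size Y <= m)%N.
Proof.
have [_ hbags _ _] := invM.
by rewrite (leq_ltn_trans (leq0n kmin) kmin_lt) -hbags size_nth_flatten.
Qed.

Lemma size_bags_step : size (bags M') = m.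
Proof.
have [_ hbags _ _] := invM.
have hsz1 : size (set_nth [::] M imin (rem_at kmin Y)) = size M.
  by rewrite size_set_nth; apply/maxn_idPr.
rewrite /bags size_flatten_set_nth ?hsz1 // size_flatten_set_nth //.
rewrite nth_set_nth /= eq_sym (negbTE imin_imax) -/X -/Y size_out size_rem_at //.
by rewrite -/(bags M) hbags; have := size_Y; lia.
Qed.

Lemma ipr_invariant_step : ipr_invariant M' settled'.
Proof.
have [hsz hbags hcoll hsettled] := invM.
have hBminY : Bmin \in Y by apply: mem_nth.
have hBmin_bags : Bmin \in bags M by apply: mem_flatten_nth hBminY.
have ge_min B : B \in bags M' -> pB p Bmin <= pB p B.
  case/flatten_nthP => i _; rewrite nth_step; case: ifP => _; first exact: out_ge.
  case: ifP => _ hB; apply: Bmin_min; last exact: mem_flatten_nth hB.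
  exact: mem_flatten_nth (mem_rem_at hB).
split.
- by rewrite /M' !size_set_nth !(maxn_idPr _).
- exact: size_bags_step.
- move=> i B B'; rewrite !nth_step; case: ifP => _; first exact: out_le2.
  case: ifP => _; last exact: hcoll.
  by move=> /mem_rem_at hB /mem_rem_at hB'; apply: hcoll hB hB'.
move=> i B B' hi; rewrite nth_step => hB hs /ge_min hB'.
suff : pB p B <= 2 * pB p Bmin by lra.
move: hi hB; rewrite /settled'; have [-> | _] := eqVneq i imax.
  by rewrite imax_unsettled eq_sym (negbTE imin_imax).
have [-> _ /mem_rem_at hB | _] := eqVneq i imin; first exact: hcoll hB hBminY hs.
by rewrite orbF => hi hB; apply: hsettled hi hB hs hBmin_bags.
Qed.

Lemma potential_step : (potential M' settled' < potential M settled)%N.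
Proof.
have [hsz _ _ _] := invM.
have imin_m : (imin < m)%N by rewrite -hsz.
have hrem : (size (rem_at kmin Y) < if settled imin then size Y else m)%N.
  by rewrite size_rem_at //; have := size_Y; case: (settled imin); lia.
apply: (@sum_ltn_ord m _ _ (Ordinal imin_m)) => [i|] /=; rewrite nth_step /settled'.
  have [-> | _] := eqVneq (i : nat) imax.
    by rewrite imax_unsettled eq_sym (negbTE imin_imax).
  by have [-> | _] := eqVneq (i : nat) imin; [rewrite orbT ltnW | rewrite orbF].
by rewrite (negbTE imin_imax) eqxx orbT.
Qed.

End Step.

Lemma ipr_step M M' settled : ipr_invariant M settled -> loop_cond p 4 M ->
  rebalance p M M' ->
  exists settled', ipr_invariant M' settled' /\
                   (potential M' settled' < potential M settled)%N.
Proof.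
move=> invM [B1 [B2 [hB1 [hs1 [hB2 hlt]]]]] [imin [kmin [imax [kmax H]]]].
cbv zeta in H.
case: H => imin_lt [kmin_lt [Bmin_min [imax_lt [kmax_lt [hsmax [Bmax_max H]]]]]].
set Y := nth [::] M imin in kmin_lt Bmin_min H *.
set X := nth [::] M imax in kmax_lt hsmax Bmax_max H *.
set Bmin := nth [::] Y kmin in Bmin_min H *.
set Bmax := nth [::] X kmax in hsmax Bmax_max.
have [_ _ hcoll hsettled] := invM.
have hBminY : Bmin \in Y by apply: mem_nth.
have hBmaxX : Bmax \in X by apply: mem_nth.
have Bmax_heavy : 4 * pB p Bmin < pB p Bmax.
  by have := Bmin_min _ hB2; have := Bmax_max _ hB1 hs1; lra.
have Bmin_ge0 := pB_ge0 p_ge0 Bmin.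
have imin_imax : imin != imax.
  apply/eqP => E; have hBmaxY : Bmax \in Y by rewrite /Y E.
  by have := hcoll imin _ _ hBmaxY hBminY hsmax; lra.
have imax_unsettled : settled imax = false.
  apply/negbTE/negP => hset.
  by have := hsettled imax _ _ hset hBmaxX hsmax (mem_flatten_nth hBminY); lra.
have X_heavy B : B \in X -> 2 * pB p Bmin <= pB p B.
  by move=> hB; have := hcoll imax _ _ hBmaxX hB hsmax; lra.
rewrite (negbTE imin_imax) nth_set_nth /= eqxx in H.
case: H => out [hlpt ->]; rewrite set_set_nth eqxx.
have [hpre hlast hsz hperm] := LPT_inv p_ge0 hlpt; rewrite size_rcons in hsz.
have out_ge := lpt_bag_ge p_ge0 Bmin_ge0 hpre hlast hsz hperm X_heavy (lexx _).
exists (fun i => settled i || (i == imin)); split.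
  apply: ipr_invariant_step => //; exact: lpt_bag_le2.
exact: potential_step.
Qed.

End Potential.

Theorem lemma9 (R : realType) :
  exists C : nat,
  forall (n m : nat) (p : 'I_n -> R) (s : 'I_m -> R) (alpha eps : R),
    (forall j, 0 <= p j) ->
    (forall i, 0 < s i) ->
    (forall i j : 'I_m, (i <= j)%N -> s j <= s i) ->
    0 < alpha < 1 -> 0 < eps < 1 ->
    forall k : nat, executes_iterations p s alpha eps 4 k -> (k <= C * m ^ 2)%N.
Proof.
exists 2%N => n m p s alpha eps p_ge0 _ _ _ _ k [Bs [[size_Bs _] [Ms [M0 [steps last_iter]]]]].
have reach t : (t < k)%N -> exists settled,
    ipr_invariant p m (Ms t) settled /\ (potential m (Ms t) settled + t <= m * m)%N.
  elim: t => [|t IH] ht.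
    exists (fun _ => false); rewrite M0 potential_unsettled addn0.
    by split=> //; apply: ipr_invariant_init.
  have [settled [invt pot]] := IH (ltnW ht).
  have [cond [reb _]] := steps t ht.
  have [settled' [invt' pot']] := ipr_step p_ge0 invt cond reb.
  by exists settled'; split=> //; lia.
case: k last_iter reach {steps} => [|k] // last_iter reach.
have [settled [[_ hbags _ _] pot]] := reach k (ltnSn k).
have [B1 [_ [hB1 _]]] := last_iter isT.
have m_gt0 : (0 < m)%N by rewrite -hbags; case: (bags (Ms k)) hB1.
by rewrite -mulnn in pot *; nia.
Qed.
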